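(* For every mixed graph $G$ without directed cycles, $\mathrm{nd}_{\mathrm m}(G)\le\mathrm{vc}(G)+4^{\mathrm{vc}(G)}$, where $\mathrm{vc}(G)$ is the vertex cover number of the underlying undirected graph.
   Context: A mixed graph $G$ consists of a finite vertex set $V(G)$, a set $E(G)$ of undirected edges and a set $A(G)$ of directed arcs; it is simple and contains no directed cycle. $N^+(v)$, $N^-(v)$, $N^{\mathrm u}(v)$ denote out-, in- and undirected neighbors. Vertices $u,v$ have the same mixed type if $N^{\mathrm u}(u)\setminus\{v\}=N^{\mathrm u}(v)\setminus\{u\}$, $N^-(u)=N^-(v)$, $N^+(u)=N^+(v)$; $\mathrm{nd}_{\mathrm m}(G)$ is the number of mixed types. The underlying undirected graph replaces every arc by an edge. *)

From mathcomp Require Import all_boot.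
Set Implicit Arguments. Unset Strict Implicit. Unset Printing Implicit Defensive.

(* A mixed graph on a finite vertex type T: [ue] is the undirected-edge
   relation, [arc] the arc relation ([arc u v] = arc from u to v). *)
Definition mixed_graph (T : finType) (ue arc : rel T) : Prop :=
  [/\ symmetric ue, irreflexive ue, irreflexive arc,
      (forall u v, arc u v -> ~~ arc v u) &
      (forall u v, ue u v -> ~~ arc u v)].

Definition no_directed_cycle (T : finType) (arc : rel T) : Prop :=
  forall x y, arc x y -> ~~ connect arc y x.

Definition Nu (T : finType) (ue : rel T) (v : T) : {set T} := [set w | ue v w].
Definition Nout (T : finType) (arc : rel T) (v : T) : {set T} := [set w | arc v w].
Definition Nin (T : finType) (arc : rel T) (v : T) : {set T} := [set w | arc w v].

Definition same_mixed_type (T : finType) (ue arc : rel T) (u v : T) : bool :=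
  [&& Nu ue u :\ v == Nu ue v :\ u,
      Nin arc u == Nin arc v &
      Nout arc u == Nout arc v].

(* number of mixed types = number of classes of the (equivalence) relation *)
Definition nd_m (T : finType) (ue arc : rel T) : nat :=
  #|[set [set v | same_mixed_type ue arc u v] | u : T]|.

Definition underlying (T : finType) (ue arc : rel T) : rel T :=
  fun u v => [|| ue u v, arc u v | arc v u].

Definition vertex_cover (T : finType) (e : rel T) (S : {set T}) : bool :=
  [forall u, forall v, e u v ==> (u \in S) || (v \in S)].

Definition vc_number (T : finType) (e : rel T) : nat :=
  \big[minn/#|T|]_(S : {set T} | vertex_cover e S) #|S|.
(* setT is always a cover of size #|T|, so the default #|T| is harmless *)

From mathcomp Require Import all_boot.
Set Implicit Arguments. Unset Strict Implicit. Unset Printing Implicit Defensive.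

(* Fix a vertex cover S.  The vertices of S lie in at most #|S| type classes.
   The vertices outside S form an independent set, so such a vertex is
   determined, up to mixed type, by its relation to each vertex of S, which is
   one of four: no edge, an undirected edge, an in-arc or an out-arc.  Hence
   they lie in at most 4 ^ #|S| classes. *)

Lemma setD1_notin (T : finType) (A : {set T}) x : x \notin A -> A :\ x = A.
Proof.
by move=> xNA; apply/setP=> y; rewrite !inE; case: eqP => // ->; rewrite (negbTE xNA).
Qed.

Lemma eq_setD1_exchange (T : finType) (X B : {set T}) u v :
  u \notin X -> v \notin X -> (u \in B) = (v \in B) ->
  (X == B :\ u) = (X == B :\ v).
Proof.
move=> uNX vNX uBvB; have [-> //|neq_uv] := eqVneq u v.
case uB: (u \in B); last by rewrite !setD1_notin -?uBvB ?uB.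
have vB : v \in B by rewrite -uBvB.
have uvB : u \in B :\ v by rewrite !inE neq_uv.
have vuB : v \in B :\ u by rewrite !inE eq_sym neq_uv.
by apply/idP/idP => /eqP defX; [move: vNX | move: uNX]; rewrite defX ?vuB ?uvB.
Qed.

Lemma card_imset_factor (aT rT1 rT2 : finType) (f : aT -> rT1) (g : aT -> rT2)
    (A : {pred aT}) :
  {in A &, forall x y, g x = g y -> f x = f y} -> #|f @: A| <= #|g @: A|.
Proof.
move=> fg; pose h y := omap f [pick x in A | g x == y].
rewrite -(card_imset _ (@Some_inj _)) -imset_comp.
suff -> : (Some \o f) @: A = h @: (g @: A) by apply: leq_imset_card.
rewrite -imset_comp; apply: eq_in_imset => x xA /=; rewrite /h.
case: pickP => [x' /andP[x'A /eqP]|/(_ x)]; last by rewrite xA eqxx.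
by move/fg=> /= -> .
Qed.

Lemma vertex_cover_independent (T : finType) (e : rel T) S u v :
  vertex_cover e S -> u \notin S -> v \notin S -> ~~ e u v.
Proof.
move=> /forallP cover uNS vNS; apply/negP=> euv.
by have := implyP (forallP (cover u) v) euv; rewrite (negbTE uNS) (negbTE vNS).
Qed.

Section MixedTypes.

Variables (T : finType) (ue arc : rel T).
Hypothesis G : mixed_graph ue arc.

Definition type_class (u : T) : {set T} := [set v | same_mixed_type ue arc u v].

Lemma type_class_twins u v :
  Nu ue u = Nu ue v -> Nin arc u = Nin arc v -> Nout arc u = Nout arc v ->
  type_class u = type_class v.
Proof.
case: G => ue_sym ue_irr _ _ _ Nuv Ninuv Noutuv.
apply/setP=> w; rewrite !inE /same_mixed_type Nuv Ninuv Noutuv; congr (_ && _).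
apply: eq_setD1_exchange.
- by rewrite in_setD1 -Nuv /Nu inE ue_irr andbF.
- by rewrite in_setD1 /Nu inE ue_irr andbF.
- by move/setP/(_ w): Nuv; rewrite /Nu !inE ![ue w _]ue_sym.
Qed.

Definition profile (S : {set T}) (u : T) : {ffun T -> bool * bool * bool} :=
  [ffun x => if x \in S then (ue u x, arc x u, arc u x) else (false, false, false)].

Definition admissible_triples : seq (bool * bool * bool) :=
  [:: (false, false, false); (true, false, false);
      (false, true, false); (false, false, true)].

Lemma profile_type_class S u v :
  vertex_cover (underlying ue arc) S -> u \notin S -> v \notin S ->
  profile S u = profile S v -> type_class u = type_class v.
Proof.
move=> cover uNS vNS Puv.
have relS x : (ue u x, arc x u, arc u x) = (ue v x, arc x v, arc v x).
  have [xS|xNS] := boolP (x \in S).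
    by move/ffunP/(_ x): Puv; rewrite !ffunE xS.
  have := vertex_cover_independent cover uNS xNS.
  have := vertex_cover_independent cover vNS xNS.
  rewrite /underlying !negb_or => /and3P[/negbTE-> /negbTE-> /negbTE->].
  by case/and3P=> /negbTE-> /negbTE-> /negbTE->.
by apply: type_class_twins; apply/setP=> x; rewrite !inE; case: (relS x).
Qed.

Lemma profile_admissible S u :
  profile S u \in pffun_on (false, false, false) S admissible_triples.
Proof.
case: G => ue_sym _ _ arc_asym ue_arc.
apply/pffun_onP; split.
  by apply/subsetP=> x; rewrite inE ffunE; case: (x \in S).
move=> _ /imageP[x xS ->]; rewrite ffunE xS.
have [uex|_] := boolP (ue u x).
  have xNu : ~~ arc x u by apply: ue_arc; rewrite ue_sym.
  by rewrite (negbTE xNu) (negbTE (ue_arc _ _ uex)) !inE.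
have [/arc_asym/negbTE-> | _] := boolP (arc x u); first by rewrite !inE.
by case: (arc u x); rewrite !inE.
Qed.

Lemma nd_m_le_cover S :
  vertex_cover (underlying ue arc) S -> nd_m ue arc <= #|S| + 4 ^ #|S|.
Proof.
move=> cover; have -> : nd_m ue arc = #|type_class @: (S :|: ~: S)|.
  by rewrite setUCr; apply: eq_card => X; apply/imsetP/imsetP => -[u _ ->]; exists u.
rewrite imsetU.
apply: leq_trans (leq_card_setU _ _) (leq_add (leq_imset_card _ _) _).
apply: leq_trans (card_imset_factor (g := profile S) _) _.
  by move=> u v; rewrite !inE; apply: profile_type_class.
have profiles_admissible :
    [set profile S u | u in ~: S]
      \subset pffun_on (false, false, false) S admissible_triples.
  by apply/subsetP=> _ /imsetP[u _ ->]; apply: profile_admissible.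
apply: leq_trans (subset_leq_card profiles_admissible) _.
by rewrite card_pffun_on (card_uniqP _).
Qed.

End MixedTypes.

Theorem mainTheorem16 (T : finType) (ue arc : rel T) :
  mixed_graph ue arc -> no_directed_cycle arc ->
  nd_m ue arc <= vc_number (underlying ue arc) + 4 ^ vc_number (underlying ue arc).
Proof.
move=> G _; rewrite /vc_number; elim/big_ind: _.
- by apply: leq_trans (leq_imset_card _ _) (leq_addr _ _).
- by move=> m n; rewrite /minn; case: ifP.
- by move=> S; apply: nd_m_le_cover.
Qed.
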